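(* $\mathrm{L\text{-}ESO}_{d[0,1]}[=,\mathrm{SUM}]\equiv_{\mathbb R}\mathrm{L\text{-}ESO}_{d[0,1]}[=,\mathrm{SUM},0,1]$. The same equivalence holds when both logics are restricted to almost conjunctive $\ddot\exists^*\forall^*$-formulae.
   Context: Conventions on structures and $\mathrm{ESO}_{\mathbb R}$. Let $\tau$ be a finite relational vocabulary and $\sigma$ a finite functional vocabulary. An $\mathbb R$-structure of vocabulary $\tau\cup\sigma$ is a tuple $\mathfrak A=(A,\mathbb R,(R^{\mathfrak A})_{R\in\tau},(g^{\mathfrak A})_{g\in\sigma})$ where $A$ is a finite set with at least two elements, each $R^{\mathfrak A}\subseteq A^{\mathrm{ar}(R)}$ and each $g^{\mathfrak A}\colon A^{\mathrm{ar}(g)}\to\mathbb R$. For $S\subseteq\mathbb R$, $\mathfrak A$ is an $S$-structure if every $g^{\mathfrak A}$ takes values in $S$, and a $d[0,1]$-structure if every $g^{\mathfrak A}$ is a probability distribution on $A^{\mathrm{ar}(g)}$. If $\sigma=\emptyset$, $\mathfrak A$ is a finite structure. Numerical terms are built by $i::=c\mid f(\vec x)\mid i+i\mid i\times i\mid \mathrm{SUM}_{\vec y}\,i$, where $c\in\mathbb R$ is a constant, $f$ is a function symbol or function variable, and $\vec x,\vec y$ are tuples of first-order variables; under an assignment $s$, $f(\vec x)$ denotes $f^{\mathfrak A}(s(\vec x))$, $+,\times$ are real addition and multiplication, and $\mathrm{SUM}_{\vec y}\,i$ denotes $\sum_{\vec a\in A^{|\vec y|}}[i]_{s[\vec a/\vec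 y]}$ (the variables $\vec y$ become bound). For $O\subseteq\{+,\times,\mathrm{SUM}\}$, $E\subseteq\{=,<,\le\}$, $C\subseteq\mathbb R$, the formulae of $\mathrm{ESO}_{\mathbb R}[O,E,C]$ are given by $\phi::= x=y\mid\neg x=y\mid i\,e\,j\mid\neg\, i\,e\,j\mid R(\vec x)\mid\neg R(\vec x)\mid\phi\wedge\phi\mid\phi\vee\phi\mid\exists x\phi\mid\forall x\phi\mid\exists f\phi$, where $i,j$ are numerical terms using only operations in $O$ and constants in $C$, $e\in E$, $R\in\tau$, and $f$ is a function variable. Semantics is Tarskian: first-order variables range over $A$ and $\exists f$ ranges over all functions $A^{\mathrm{ar}(f)}\to\mathbb R$. For $S\subseteq\mathbb R$, $\mathrm{ESO}_S[O,E,C]$ has the same syntax but $\exists f$ ranges over functions $A^{\mathrm{ar}(f)}\to S$; in $\mathrm{ESO}_{d[0,1]}[O,E,C]$, $\exists f$ ranges over probability distributions on $A^{\mathrm{ar}(f)}$. Free function variables are interpreted like symbols of $\sigma$. We list the elements of $O,E,C$ together in brackets, e.g. $\mathrm{ESO}_{\mathbb R}[\le,+,\mathrm{SUM},0,1]$ means $O=\{+,\mathrm{SUM}\}$, $E=\{\le\}$, $C=\{0,1\}$. Fragments. The loose fragment $\mathrm{L\text{-}ESO}_S[O,E,C]$ of $\mathrm{ESO}_S[O,E,C]$ ($S$ a set of reals or $d[0,1]$) consists of the formulae containing no negated numerical atom $\neg\, i\,e\,j$. A formula is almost conjunctive if for every subformula $(\psi_1\vee\psi_2)$, at least one of $\psi_1,\psi_2$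 contains no numerical term. For a regular expression $L$ over $\{\ddot\exists,\exists,\forall\}$, the $L$-formulae of a logic are those in prenex form whose quantifier prefix belongs to $L$, where $\ddot\exists$ stands for an existential function quantifier and $\exists,\forall$ for first-order quantifiers (e.g. $\ddot\exists^*\forall^*$). Expressivity. For a formula $\phi$ and $X\subseteq\mathbb R$ or $X=d[0,1]$, $\mathrm{Struc}_X(\phi)$ is the class of pairs $(\mathfrak A,s)$ with $\mathfrak A$ an $X$-structure and $s$ an assignment of the free first-order variables such that $\mathfrak A\models_s\phi$. For logics $\mathcal L,\mathcal L'$, $\mathcal L\le_X\mathcal L'$ means every $\phi\in\mathcal L$ has some $\psi\in\mathcal L'$ with $\mathrm{Struc}_X(\phi)=\mathrm{Struc}_X(\psi)$; $\equiv_X$ means $\le_X$ in both directions. *)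

From Stdlib Require Import Reals.
From HB Require Import structures.
From mathcomp Require Import all_boot all_order all_algebra.
From mathcomp Require Import Rstruct.
Set Implicit Arguments. Unset Strict Implicit. Unset Printing Implicit Defensive.
Import Order.TTheory GRing.Theory Num.Theory.
Local Open Scope ring_scope.

Record vocab := Vocab {
  nrel : nat; rar : 'I_nrel -> nat;
  nfun : nat; far : 'I_nfun -> nat }.

Inductive op := OpAdd | OpMul | OpSum.
Inductive cmp := CEq | CLt | CLe.

Definition op_eqb (a b : op) : bool :=
  match a, b with OpAdd, OpAdd | OpMul, OpMul | OpSum, OpSum => true | _, _ => false end.
Definition cmp_eqb (a b : cmp) : bool :=
  match a, b with CEq, CEq | CLt, CLt | CLe, CLe => true | _, _ => false end.

Section Syntax.
Variable V : vocab.

(** Numerical terms.  First-order variables are natural numbers; function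
    variables are named by a pair (name, arity). *)
Inductive nterm :=
| NConst (c : R)
| NFSym (g : 'I_(nfun V)) (xs : (far g).-tuple nat)
| NFVar (f k : nat) (xs : k.-tuple nat)
| NAdd (i j : nterm)
| NMul (i j : nterm)
| NSum (ys : seq nat) (i : nterm).

(** Formulae of ESO (negation normal form, as in the paper). *)
Inductive form :=
| FEq (x y : nat)
| FNeq (x y : nat)
| FCmp (e : cmp) (i j : nterm)
| FNCmp (e : cmp) (i j : nterm)
| FRel (r : 'I_(nrel V)) (xs : (rar r).-tuple nat)
| FNRel (r : 'I_(nrel V)) (xs : (rar r).-tuple nat)
| FAnd (p q : form)
| FOr (p q : form)
| FEx (x : nat) (p : form)
| FAll (x : nat) (p : form)
| FExF (f k : nat) (p : form).

Fixpoint free_t (v : nat) (i : nterm) : bool :=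
  match i with
  | NConst _ => false
  | NFSym _ xs => v \in tval xs
  | NFVar _ _ xs => v \in tval xs
  | NAdd i j | NMul i j => free_t v i || free_t v j
  | NSum ys i => (v \notin ys) && free_t v i
  end.

Fixpoint free (v : nat) (p : form) : bool :=
  match p with
  | FEq x y | FNeq x y => (v == x) || (v == y)
  | FCmp _ i j | FNCmp _ i j => free_t v i || free_t v j
  | FRel _ xs | FNRel _ xs => v \in tval xs
  | FAnd p q | FOr p q => free v p || free v q
  | FEx x p | FAll x p => (v != x) && free v p
  | FExF _ _ p => free v p
  end.

(** No free function variables ([bnd] = function variables bound so far). *)
Fixpoint fclosed_t (bnd : seq (nat * nat)) (i : nterm) : bool :=
  match i with
  | NConst _ | NFSym _ _ => true
  | NFVar f k _ => (f, k) \in bnd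
  | NAdd i j | NMul i j => fclosed_t bnd i && fclosed_t bnd j
  | NSum _ i => fclosed_t bnd i
  end.

Fixpoint fclosed (bnd : seq (nat * nat)) (p : form) : bool :=
  match p with
  | FEq _ _ | FNeq _ _ | FRel _ _ | FNRel _ _ => true
  | FCmp _ i j | FNCmp _ i j => fclosed_t bnd i && fclosed_t bnd j
  | FAnd p q | FOr p q => fclosed bnd p && fclosed bnd q
  | FEx _ p | FAll _ p => fclosed bnd p
  | FExF f k p => fclosed ((f, k) :: bnd) p
  end.

(** Fragment ESO[O,E,C]: terms use only operations in O and constants in C,
    atoms use only comparison symbols in E. *)
Fixpoint term_ok (O : op -> bool) (C : R -> bool) (i : nterm) : bool :=
  match i with
  | NConst c => C c
  | NFSym _ _ | NFVar _ _ _ => true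
  | NAdd i j => O OpAdd && term_ok O C i && term_ok O C j
  | NMul i j => O OpMul && term_ok O C i && term_ok O C j
  | NSum _ i => O OpSum && term_ok O C i
  end.

Fixpoint form_ok (O : op -> bool) (E : cmp -> bool) (C : R -> bool) (p : form) : bool :=
  match p with
  | FEq _ _ | FNeq _ _ | FRel _ _ | FNRel _ _ => true
  | FCmp e i j | FNCmp e i j => E e && term_ok O C i && term_ok O C j
  | FAnd p q | FOr p q => form_ok O E C p && form_ok O E C q
  | FEx _ p | FAll _ p | FExF _ _ p => form_ok O E C p
  end.

Fixpoint loose (p : form) : bool :=
  match p with
  | FNCmp _ _ _ => false
  | FAnd p q | FOr p q => loose p && loose q
  | FEx _ p | FAll _ p | FExF _ _ p => loose p
  | _ => true
  end.

Fixpoint has_num (p : form) : bool :=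
  match p with
  | FCmp _ _ _ | FNCmp _ _ _ => true
  | FAnd p q | FOr p q => has_num p || has_num q
  | FEx _ p | FAll _ p | FExF _ _ p => has_num p
  | _ => false
  end.

Fixpoint almost_conj (p : form) : bool :=
  match p with
  | FOr p q => (~~ has_num p || ~~ has_num q) && almost_conj p && almost_conj q
  | FAnd p q => almost_conj p && almost_conj q
  | FEx _ p | FAll _ p | FExF _ _ p => almost_conj p
  | _ => true
  end.

(** Prenex form with quantifier prefix in (function-exists)^* (forall)^*. *)
Fixpoint qfree (p : form) : bool :=
  match p with
  | FAnd p q | FOr p q => qfree p && qfree q
  | FEx _ _ | FAll _ _ | FExF _ _ _ => false
  | _ => true
  end.

Fixpoint prefix_A (p : form) : bool :=
  match p with
  | FAll _ q => prefix_A q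
  | _ => qfree p
  end.

Fixpoint prefix_EfA (p : form) : bool :=
  match p with
  | FExF _ _ q => prefix_EfA q
  | _ => prefix_A p
  end.

(** An R-structure over a finite universe A: relations and real-valued
    functions (inputs are sequences; only those of the right arity are used). *)
Record structure (A : finType) := Structure {
  rel_i : forall r : 'I_(nrel V), seq A -> bool;
  fun_i : forall g : 'I_(nfun V), seq A -> R }.

Section Sem.
Variables (A : finType) (I : structure A).

Definition upd (s : nat -> A) (x : nat) (a : A) : nat -> A :=
  fun y => if y == x then a else s y.

Fixpoint upds (s : nat -> A) (ys : seq nat) (t : seq A) : nat -> A :=
  match ys, t with
  | y :: ys', a :: t' => upd (upds s ys' t') y a
  | _, _ => s
  end.

Definition fenv := nat -> nat -> seq A -> R.

Definition updF (F : fenv) (f k : nat) (g : seq A -> R) : fenv :=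
  fun f' k' => if (f' == f) && (k' == k) then g else F f' k'.

Fixpoint eval (F : fenv) (s : nat -> A) (i : nterm) : R :=
  match i with
  | NConst c => c
  | NFSym g xs => fun_i I g (map s (tval xs))
  | NFVar f k xs => F f k (map s (tval xs))
  | NAdd i j => eval F s i + eval F s j
  | NMul i j => eval F s i * eval F s j
  | NSum ys i => \sum_(t : (size ys).-tuple A) eval F (upds s ys (tval t)) i
  end.

Definition cmpR (e : cmp) (a b : R) : Prop :=
  match e with CEq => a = b | CLt => a < b | CLe => a <= b end.

Definition is_distr (k : nat) (g : seq A -> R) : Prop :=
  (forall t : k.-tuple A, 0 <= g (tval t)) /\
  \sum_(t : k.-tuple A) g (tval t) = 1.

(** Satisfaction, with function quantifiers ranging over distributions
    (the d[0,1] semantics). *)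
Fixpoint sat (F : fenv) (s : nat -> A) (p : form) : Prop :=
  match p with
  | FEq x y => s x = s y
  | FNeq x y => s x <> s y
  | FCmp e i j => cmpR e (eval F s i) (eval F s j)
  | FNCmp e i j => ~ cmpR e (eval F s i) (eval F s j)
  | FRel r xs => rel_i I r (map s (tval xs))
  | FNRel r xs => ~~ rel_i I r (map s (tval xs))
  | FAnd p q => sat F s p /\ sat F s q
  | FOr p q => sat F s p \/ sat F s q
  | FEx x p => exists a : A, sat F (upd s x a) p
  | FAll x p => forall a : A, sat F (upd s x a) p
  | FExF f k p => exists g : seq A -> R, is_distr k g /\ sat (updF F f k g) s p
  end.

End Sem.

Definition sat0 (A : finType) (I : structure A) (s : nat -> A) (p : form) : Prop :=
  sat I (fun _ _ _ => 0) s p.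

Definition struc_nonempty (p : form) : Prop :=
  exists (A : finType) (I : structure A) (s : nat -> A), (1 < #|A|)%N /\ sat0 I s p.

(** Struc_R(p) = Struc_R(q), where Struc_R(p) is the class of pairs
    (A, s) with A an R-structure (|A| >= 2) and s an assignment of exactly
    the free first-order variables of p, such that A |=_s p. *)
Definition struc_eqR (p q : form) : Prop :=
  ((forall v, free v p = free v q) /\
   (forall (A : finType) (I : structure A) (s : nat -> A),
       (1 < #|A|)%N -> (sat0 I s p <-> sat0 I s q)))
  \/ (~ struc_nonempty p /\ ~ struc_nonempty q).

Definition leR (L1 L2 : form -> bool) : Prop :=
  forall p, L1 p -> exists q, L2 q /\ struc_eqR p q.
Definition equivR (L1 L2 : form -> bool) : Prop := leR L1 L2 /\ leR L2 L1.

Definition L_ESO_d (O : op -> bool) (E : cmp -> bool) (C : R -> bool) (p : form) : bool :=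
  [&& fclosed [::] p, form_ok O E C p & loose p].

End Syntax.

Definition O_SUM : op -> bool := fun o => op_eqb o OpSum.
Definition E_eq : cmp -> bool := fun e => cmp_eqb e CEq.
Definition C_none : R -> bool := fun _ => false.
Definition C_01 : R -> bool := fun c => (c == 0) || (c == 1).

From Pilot Require Import Defs.
From Stdlib Require Import Reals.
From mathcomp Require Import all_boot all_order all_algebra.
From mathcomp Require Import Rstruct zify.
Set Implicit Arguments. Unset Strict Implicit. Unset Printing Implicit Defensive.
Import Order.TTheory GRing.Theory Num.Theory.

(* Every formula of L-ESO_{d[0,1]}[=,SUM] is also one of L-ESO_{d[0,1]}[=,SUM,0,1],
   so only the converse needs work.  Given a formula p with constants in {0,1},
   pick a function name M and first-order variables x < y < w that do not occur
   in p, and quantify two fresh distributions: a nullary one M(), which is forced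
   to be the constant 1, and a binary one M(.,.).  The loose atom
   SUM_w M(x,w) = M(x,x), imposed for every x, says that each row of M(.,.) puts
   all its mass on the diagonal; by non-negativity M(x,y) = 0 whenever x <> y.
   Hence, replacing 1 by M() and 0 by M(x,y) in p and guarding the result by
   forall x forall y (SUM_w M(x,w) = M(x,x) /\ (x = y \/ p[M(x,y)/0, M()/1]))
   gives an equivalent constant-free loose formula on every structure with at
   least two elements.  The guard is inserted below the quantifier prefix
   (existential function quantifiers and universal first-order quantifiers), so
   the shape ddot-exists^* forall^* and almost-conjunctivity are preserved too. *)

Section Syntax.
Variable V : vocab.
Local Notation nterm := (nterm V).
Local Notation form := (Defs.form V).

Definition max_list (l : seq nat) : nat := foldr maxn 0 l.

Lemma max_list_ub v l : v \in l -> v <= max_list l.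
Proof.
elim: l => [|a l IH] //=; rewrite in_cons leq_max => /orP[/eqP->|/IH->];
  by rewrite ?leqnn ?orbT.
Qed.

Fixpoint maxv_t (i : nterm) : nat :=
  match i with
  | NConst _ => 0
  | NFSym _ xs | NFVar _ _ xs => max_list xs
  | NAdd i j | NMul i j => maxn (maxv_t i) (maxv_t j)
  | NSum ys i => maxn (max_list ys) (maxv_t i)
  end.

Fixpoint maxv (p : form) : nat :=
  match p with
  | FEq x y | FNeq x y => maxn x y
  | FCmp _ i j | FNCmp _ i j => maxn (maxv_t i) (maxv_t j)
  | FRel _ xs | FNRel _ xs => max_list xs
  | FAnd p q | FOr p q => maxn (maxv p) (maxv q)
  | FEx x p | FAll x p => maxn x (maxv p)
  | FExF _ _ p => maxv p
  end.

Fixpoint maxf_t (i : nterm) : nat :=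
  match i with
  | NFVar f _ _ => f
  | NAdd i j | NMul i j => maxn (maxf_t i) (maxf_t j)
  | NSum _ i => maxf_t i
  | _ => 0
  end.

Fixpoint maxf (p : form) : nat :=
  match p with
  | FCmp _ i j | FNCmp _ i j => maxn (maxf_t i) (maxf_t j)
  | FAnd p q | FOr p q => maxn (maxf p) (maxf q)
  | FEx _ p | FAll _ p => maxf p
  | FExF f _ p => maxn f (maxf p)
  | _ => 0
  end.

Lemma free_t_maxv v i : free_t v i -> v <= maxv_t i.
Proof.
elim: i => //= [g xs|f k xs|i IHi j IHj|i IHi j IHj|ys i IH]; try exact: max_list_ub.
- by case/orP=> [/IHi|/IHj]; lia.
- by case/orP=> [/IHi|/IHj]; lia.
- by case/andP=> _ /IH; lia.
Qed.

Lemma free_maxv v p : Defs.free v p -> v <= maxv p.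
Proof.
elim: p => [x y|x y|e i j|e i j|r xs|r xs|p IHp q IHq|p IHp q IHq|x p IH|x p IH|f k p IH] /=;
  try exact: max_list_ub.
all: try by case/orP=> [/eqP|/eqP]; lia.
all: try by case/orP=> [/free_t_maxv|/free_t_maxv]; lia.
all: try by case/orP=> [/IHp|/IHq]; lia.
all: try by case/andP=> _ /IH; lia.
exact: IH.
Qed.

Lemma fclosed_t_mono b b' (i : nterm) : {subset b <= b'} -> fclosed_t b i -> fclosed_t b' i.
Proof.
move=> sub; elim: i => //= [f k xs|i IHi j IHj|i IHi j IHj]; first exact: sub.
- by case/andP=> /IHi -> /IHj.
- by case/andP=> /IHi -> /IHj.
Qed.

Lemma fclosed_mono b b' (p : form) : {subset b <= b'} -> Defs.fclosed b p -> Defs.fclosed b' p.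
Proof.
elim: p b b' => [x y|x y|e i j|e i j|r xs|r xs|p IHp q IHq|p IHp q IHq|x p IH|x p IH|f k p IH] b b' sub //=.
all: try by case/andP=> /(fclosed_t_mono sub) -> /(fclosed_t_mono sub).
all: try by case/andP=> /(IHp _ _ sub) -> /(IHq _ _ sub).
all: try exact: IH.
by apply: IH => u; rewrite !inE => /orP[->|/sub->]; rewrite ?orbT.
Qed.

Lemma term_ok_weaken O (C C' : R -> bool) (i : nterm) :
  (forall c, C c -> C' c) -> term_ok O C i -> term_ok O C' i.
Proof.
move=> CC'; elim: i => [c|g xs|f k xs|i IHi j IHj|i IHi j IHj|ys i IH] //=; first exact: CC'.
- by case/andP=> /andP[-> /IHi ->] /IHj.
- by case/andP=> /andP[-> /IHi ->] /IHj.
- by case/andP=> -> /IH.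
Qed.

Lemma form_ok_weaken O E (C C' : R -> bool) (p : form) :
  (forall c, C c -> C' c) -> form_ok O E C p -> form_ok O E C' p.
Proof.
move=> CC'; have ok_t := term_ok_weaken CC'.
elim: p => [x y|x y|e i j|e i j|r xs|r xs|p IHp q IHq|p IHp q IHq|x p IH|x p IH|f k p IH] //=.
all: try by case/andP=> /andP[-> /ok_t ->] /ok_t.
all: by case/andP=> /IHp -> /IHq.
Qed.

(* Replacing every constant by one of two given terms: 1 by [one], any other
   constant (in our use: 0) by [zero].  Only numerical terms change, so every
   purely syntactic property of the formula is preserved. *)
Section Subst01.
Variables zero one : nterm.

Fixpoint subst01_t (i : nterm) : nterm :=
  match i with
  | NConst c => if c == 1%R then one else zero
  | NAdd i j => NAdd (subst01_t i) (subst01_t j)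
  | NMul i j => NMul (subst01_t i) (subst01_t j)
  | NSum ys i => NSum ys (subst01_t i)
  | _ => i
  end.

Fixpoint subst01 (p : form) : form :=
  match p with
  | FCmp e i j => FCmp e (subst01_t i) (subst01_t j)
  | FNCmp e i j => FNCmp e (subst01_t i) (subst01_t j)
  | FAnd p q => FAnd (subst01 p) (subst01 q)
  | FOr p q => FOr (subst01 p) (subst01 q)
  | FEx x p => FEx x (subst01 p)
  | FAll x p => FAll x (subst01 p)
  | FExF f k p => FExF f k (subst01 p)
  | _ => p
  end.

Lemma loose_subst01 p : loose (subst01 p) = loose p.
Proof. by elim: p => //= *; congruence. Qed.

Lemma has_num_subst01 p : has_num (subst01 p) = has_num p.
Proof. by elim: p => //= *; congruence. Qed.

Lemma almost_conj_subst01 p : almost_conj (subst01 p) = almost_conj p.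
Proof. by elim: p => //= *; rewrite ?has_num_subst01; congruence. Qed.

Lemma qfree_subst01 p : qfree (subst01 p) = qfree p.
Proof. by elim: p => //= *; congruence. Qed.

Lemma term_ok_subst01 O C C' i :
  term_ok O C' zero -> term_ok O C' one -> term_ok O C i -> term_ok O C' (subst01_t i).
Proof.
move=> ok0 ok1; elim: i => //= [c|i IHi j IHj|i IHi j IHj|ys i IH]; first by case: ifP.
- by case/andP=> /andP[-> /IHi ->] /IHj.
- by case/andP=> /andP[-> /IHi ->] /IHj.
- by case/andP=> -> /IH.
Qed.

Lemma form_ok_subst01 O E C C' p :
  term_ok O C' zero -> term_ok O C' one -> form_ok O E C p -> form_ok O E C' (subst01 p).
Proof.
move=> ok0 ok1; have okt := term_ok_subst01 ok0 ok1.
elim: p => //= [e i j|e i j|p IHp q IHq|p IHp q IHq].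
all: try by case/andP=> /andP[-> /okt ->] /okt.
all: by case/andP=> /IHp -> /IHq.
Qed.

Lemma free_subst01 v p : ~~ free_t v zero -> ~~ free_t v one ->
  Defs.free v (subst01 p) = Defs.free v p.
Proof.
move=> nf0 nf1.
have eq_t i : free_t v (subst01_t i) = free_t v i.
  elim: i => //= [c|i IHi j IHj|i IHi j IHj|ys i IH]; last by rewrite IH.
  + by case: ifP => _; apply: negbTE.
  + by rewrite IHi IHj.
  + by rewrite IHi IHj.
by elim: p => //= *; rewrite ?eq_t; congruence.
Qed.

Lemma fclosed_subst01 b p : fclosed_t b zero -> fclosed_t b one ->
  Defs.fclosed b p -> Defs.fclosed b (subst01 p).
Proof.
have ok_t b' i : fclosed_t b' zero -> fclosed_t b' one -> fclosed_t b' i ->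
    fclosed_t b' (subst01_t i).
  move=> c0 c1; elim: i => //= [c|i IHi j IHj|i IHi j IHj]; first by case: ifP.
  + by case/andP=> /IHi -> /IHj.
  + by case/andP=> /IHi -> /IHj.
elim: p b => [x y|x y|e i j|e i j|r xs|r xs|p IHp q IHq|p IHp q IHq|x p IH|x p IH|f k p IH] b c0 c1 //=.
all: try by case/andP=> /(ok_t _ _ c0 c1) -> /(ok_t _ _ c0 c1).
all: try by case/andP=> /(IHp _ c0 c1) -> /(IHq _ c0 c1).
all: try exact: IH.
have sub : {subset b <= (f, k) :: b} by move=> u; rewrite inE => ->; rewrite orbT.
by apply: IH; apply: fclosed_t_mono sub _.
Qed.

End Subst01.

Definition zero_term (x y M : nat) : nterm := NFVar V M [tuple x; y].
Definition one_term (M : nat) : nterm := NFVar V M [tuple].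

Definition diag_mass (x w M : nat) : form :=
  FCmp CEq (NSum [:: w] (NFVar V M [tuple x; w])) (NFVar V M [tuple x; x]).

Definition guard (x y w M : nat) (p : form) : form :=
  FAll x (FAll y (FAnd (diag_mass x w M)
    (FOr (FEq V x y) (subst01 (zero_term x y M) (one_term M) p)))).

Fixpoint under_prefix (h : form -> form) (p : form) : form :=
  match p with
  | FExF f k q => FExF f k (under_prefix h q)
  | FAll v q => FAll v (under_prefix h q)
  | _ => h p
  end.

Definition elim01 (p : form) : form :=
  let x := (maxv p).+1 in let M := (maxf p).+1 in
  FExF M 0 (FExF M 2 (under_prefix (guard x x.+1 x.+2 M) p)).

Section GuardSyntax.
Variables x y w M : nat.

Lemma loose_guard q : loose q -> loose (guard x y w M q).
Proof. by rewrite /= loose_subst01. Qed.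

Lemma almost_conj_guard q : almost_conj q -> almost_conj (guard x y w M q).
Proof. by rewrite /= almost_conj_subst01. Qed.

Lemma prefix_A_guard q : qfree q -> prefix_A (guard x y w M q).
Proof. by rewrite /= qfree_subst01. Qed.

Lemma form_ok_guard (O : op -> bool) (E : cmp -> bool) C C' q : O OpSum -> E CEq ->
  form_ok O E C q -> form_ok O E C' (guard x y w M q).
Proof. by move=> sumO eqE okq /=; rewrite sumO eqE; apply: form_ok_subst01 okq. Qed.

Lemma fclosed_guard b q : (M, 0) \in b -> (M, 2) \in b ->
  Defs.fclosed b q -> Defs.fclosed b (guard x y w M q).
Proof. by move=> M0 M2 clq /=; rewrite M2; exact: fclosed_subst01. Qed.

Lemma free_guard q v : maxv q < x < y ->
  Defs.free v (guard x y w M q) = Defs.free v q.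
Proof.
move=> /andP[qx xy]; have notfree u : x <= u -> Defs.free u q = false.
  by move=> xu; apply/negP => /free_maxv; lia.
have [->|vx] := eqVneq v x; first by rewrite /= eqxx notfree.
have [->|vy] := eqVneq v y; first by rewrite /= eqxx andbF notfree // ltnW.
have nf0 : ~~ free_t v (zero_term x y M) by rewrite /= !inE negb_or vx vy.
rewrite /= free_subst01 // !inE (negbTE vx) (negbTE vy) /=.
by case: (v == w).
Qed.

End GuardSyntax.

Definition prefix_transparent (P : form -> bool) : Prop :=
  (forall v q, P (FAll v q) = P q) /\ (forall f k q, P (FExF f k q) = P q).

Lemma under_prefix_preserve (P Q : form -> bool) (h : form -> form) :
  prefix_transparent P -> prefix_transparent Q -> (forall q, P q -> Q (h q)) ->
  forall p, P p -> Q (under_prefix h p).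
Proof.
move=> [PA PE] [QA QE] hPQ.
elim=> [x y|x y|e i j|e i j|r xs|r xs|p _ q _|p _ q _|v p _|v p IH|f k p IH] /=;
  [exact: hPQ .. | by rewrite PA QA | by rewrite PE QE].
Qed.

Lemma prefix_A_EfA (p : form) : prefix_A p -> prefix_EfA p.
Proof. by case: p. Qed.

Lemma prefix_EfA_under_prefix (h : form -> form) p :
  (forall q, qfree q -> prefix_A (h q)) -> prefix_EfA p -> prefix_EfA (under_prefix h p).
Proof.
move=> hq; have prefA q : prefix_A q -> prefix_A (under_prefix h q).
  by elim: q => [a b|a b|e i j|e i j|r xs|r xs|q1 _ q2 _|q1 _ q2 _|v q1 _|v q1 IH|f k q1 IH];
    try exact: hq.
elim: p => [x y|x y|e i j|e i j|r xs|r xs|p _ q _|p _ q _|v p _|v p _|f k p IH];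
  last exact: IH.
all: by move=> /prefA /prefix_A_EfA.
Qed.

Lemma fclosed_under_prefix (h : form -> form) (b0 : seq (nat * nat)) p :
  (forall b q, {subset b0 <= b} -> Defs.fclosed b q -> Defs.fclosed b (h q)) ->
  forall b, {subset b0 <= b} -> Defs.fclosed b p -> Defs.fclosed b (under_prefix h p).
Proof.
move=> hq; elim: p => [x y|x y|e i j|e i j|r xs|r xs|p _ q _|p _ q _|v p _|v p IH|f k p IH] b sub;
  try exact: hq; first exact: IH.
by apply: IH => u /sub; rewrite inE => ->; rewrite orbT.
Qed.

Lemma free_under_prefix (h : form -> form) x p :
  (forall q, maxv q < x -> forall v, Defs.free v (h q) = Defs.free v q) ->
  maxv p < x -> forall v, Defs.free v (under_prefix h p) = Defs.free v p.
Proof.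
move=> hq; elim: p => [x0 y0|x0 y0|e i j|e i j|r xs|r xs|p _ q _|p _ q _|u p _|u p IH|f k p IH] px v;
  try exact: hq; rewrite /= IH //; move: px => /=; lia.
Qed.

End Syntax.

Section Elim01Syntax.
Variable V : vocab.
Local Notation form := (Defs.form V).

Lemma free_elim01 (p : form) v : Defs.free v (elim01 p) = Defs.free v p.
Proof.
apply: (free_under_prefix (x := (maxv p).+1)) => // q qx u.
by rewrite free_guard // qx /=.
Qed.

Lemma elim01_L_ESO (p : form) :
  L_ESO_d O_SUM E_eq C_01 p -> L_ESO_d O_SUM E_eq C_none (elim01 p).
Proof.
case/and3P=> clp okp lp; rewrite /L_ESO_d /elim01 /=.
set x := (maxv p).+1; set M := (maxf p).+1; set b0 := [:: (M, 2); (M, 0)].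
apply/and3P; split.
- apply: (@fclosed_under_prefix _ _ b0) => // [b q sub|]; last exact: fclosed_mono clp.
  by apply: fclosed_guard; apply: sub; rewrite !inE eqxx ?orbT.
- apply: (under_prefix_preserve (P := form_ok O_SUM E_eq C_01)
    (Q := form_ok O_SUM E_eq C_none)) okp => // q.
  by apply: form_ok_guard.
- apply: (under_prefix_preserve (P := @loose V) (Q := @loose V)) lp => //.
  exact: loose_guard.
Qed.

Lemma almost_conj_elim01 (p : form) : almost_conj p -> almost_conj (elim01 p).
Proof.
apply: (under_prefix_preserve (P := @almost_conj V) (Q := @almost_conj V)) => //.
exact: almost_conj_guard.
Qed.

Lemma prefix_EfA_elim01 (p : form) : prefix_EfA p -> prefix_EfA (elim01 p).
Proof. by apply: prefix_EfA_under_prefix; exact: prefix_A_guard. Qed.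

Lemma L_ESO_d_const01 (p : form) :
  L_ESO_d O_SUM E_eq C_none p -> L_ESO_d O_SUM E_eq C_01 p.
Proof. by case/and3P=> clp okp lp; rewrite /L_ESO_d clp lp (form_ok_weaken _ okp). Qed.

End Elim01Syntax.

Section Coincidence.
Variables (V : vocab) (A : finType) (I : structure V A).
Local Notation nterm := (nterm V).
Local Notation form := (Defs.form V).

Definition agree (N : nat) (s1 s2 : nat -> A) : Prop :=
  forall v, v < N -> s1 v = s2 v.

Lemma agree_upd N s1 s2 z a : agree N s1 s2 -> agree N (upd s1 z a) (upd s2 z a).
Proof. by move=> h v vN; rewrite /upd; case: ifP => // _; exact: h. Qed.

Lemma agree_upds N s1 s2 ys t : agree N s1 s2 -> agree N (upds s1 ys t) (upds s2 ys t).
Proof. by elim: ys t => [|z ys IH] [|a t] //= h; apply/agree_upd/IH. Qed.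

Lemma agree_map N s1 s2 l : max_list l < N -> agree N s1 s2 -> map s1 l = map s2 l.
Proof. by move=> lN h; apply/eq_in_map => v /max_list_ub vl; apply: h; lia. Qed.

Lemma upds_notin (s : nat -> A) ys t v : v \notin ys -> upds s ys t v = s v.
Proof.
elim: ys t => [|z ys IH] [|a t] //=; rewrite inE negb_or => /andP[vz vys].
by rewrite /upd (negbTE vz) IH.
Qed.

Lemma eval_agree F (i : nterm) N s1 s2 : maxv_t i < N -> agree N s1 s2 ->
  eval I F s1 i = eval I F s2 i.
Proof.
elim: i N s1 s2 => /= [c|g xs|f k xs|i IHi j IHj|i IHi j IHj|ys i IH] N s1 s2 iN h //.
- by rewrite (agree_map iN h).
- by rewrite (agree_map iN h).
- by rewrite (IHi N s1 s2) ?(IHj N s1 s2) //; lia.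
- by rewrite (IHi N s1 s2) ?(IHj N s1 s2) //; lia.
- by apply: eq_bigr => t _; apply: (IH N); [lia | exact: agree_upds].
Qed.

Lemma sat_agree (p : form) F N s1 s2 : maxv p < N -> agree N s1 s2 ->
  sat I F s1 p <-> sat I F s2 p.
Proof.
elim: p F N s1 s2 => /= [a b|a b|e i j|e i j|r xs|r xs|p IHp q IHq|p IHp q IHq|z p IH|z p IH|f k p IH]
  F N s1 s2 pN h.
- by rewrite !h //; lia.
- by rewrite !h //; lia.
- by rewrite !(@eval_agree F _ N s1 s2) //; lia.
- by rewrite !(@eval_agree F _ N s1 s2) //; lia.
- by rewrite (agree_map pN h).
- by rewrite (agree_map pN h).
- by rewrite (IHp F N s1 s2) ?(IHq F N s1 s2) //; lia.
- by rewrite (IHp F N s1 s2) ?(IHq F N s1 s2) //; lia.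
- have E a : sat I F (upd s1 z a) p <-> sat I F (upd s2 z a) p.
    by apply: (IH F N); [lia | exact: agree_upd].
  by split=> -[a /E]; exists a.
- have E a : sat I F (upd s1 z a) p <-> sat I F (upd s2 z a) p.
    by apply: (IH F N); [lia | exact: agree_upd].
  by split=> H a; apply/E.
- have E g : sat I (updF F f k g) s1 p <-> sat I (updF F f k g) s2 p by exact: IH pN h.
  by split=> -[g [dg /E]]; exists g.
Qed.

Definition fagree (N : nat) (F1 F2 : fenv A) : Prop :=
  forall f k l, f < N -> F1 f k l = F2 f k l.

Lemma fagree_updF N F1 F2 f k g : fagree N F1 F2 -> fagree N (updF F1 f k g) (updF F2 f k g).
Proof. by move=> h f' k' l fN; rewrite /updF; case: ifP => // _; exact: h. Qed.

Lemma eval_fagree (i : nterm) N F1 F2 s : maxf_t i < N -> fagree N F1 F2 ->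
  eval I F1 s i = eval I F2 s i.
Proof.
elim: i s => /= [c|g xs|f k xs|i IHi j IHj|i IHi j IHj|ys i IH] s iN h //; first exact: h.
- by rewrite (IHi s) ?(IHj s) //; lia.
- by rewrite (IHi s) ?(IHj s) //; lia.
- by apply: eq_bigr => t _; apply: IH.
Qed.

Lemma sat_fagree (p : form) N F1 F2 s : maxf p < N -> fagree N F1 F2 ->
  sat I F1 s p <-> sat I F2 s p.
Proof.
elim: p F1 F2 s => /= [a b|a b|e i j|e i j|r xs|r xs|p IHp q IHq|p IHp q IHq|z p IH|z p IH|f k p IH]
  F1 F2 s pN h //.
- by rewrite !(@eval_fagree _ N F1 F2) //; lia.
- by rewrite !(@eval_fagree _ N F1 F2) //; lia.
- by rewrite (IHp F1 F2 s) ?(IHq F1 F2 s) //; lia.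
- by rewrite (IHp F1 F2 s) ?(IHq F1 F2 s) //; lia.
- have E a : sat I F1 (upd s z a) p <-> sat I F2 (upd s z a) p by exact: IH.
  by split=> -[a /E]; exists a.
- have E a : sat I F1 (upd s z a) p <-> sat I F2 (upd s z a) p by exact: IH.
  by split=> H a; apply/E.
- have E g : sat I (updF F1 f k g) s p <-> sat I (updF F2 f k g) s p.
    by apply: IH; [lia | exact: fagree_updF].
  by split=> -[g [dg /E]]; exists g.
Qed.

End Coincidence.

Lemma psum_eq_term_zero (J : finType) (f : J -> R) j0 :
  (forall j, 0 <= f j)%R -> (\sum_j f j)%R = f j0 -> forall j, j != j0 -> f j = 0%R.
Proof.
move=> f_ge0 sum_f j jj0; rewrite (bigD1 j0) //= -[RHS]addr0 in sum_f.
exact: (psumr_eq0P (fun i _ => f_ge0 i) (addrI _ sum_f)).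
Qed.

Lemma tuple1_val (T : Type) (t : 1.-tuple T) : tval t = [:: thead t].
Proof. by case: t => [[|a [|b l]]]. Qed.

Section Elim01Semantics.
Variables (V : vocab) (A : finType) (I : structure V A).
Variables x y w M : nat.
Hypotheses (xy : x < y) (yw : y < w).
Local Notation nterm := (nterm V).
Local Notation form := (Defs.form V).
Local Notation zero := (zero_term V x y M).
Local Notation one := (one_term V M).

(* What quantification over distributions guarantees for the new functions:
   M() = 1 (the only distribution on a singleton) and M(.,.) >= 0. *)
Definition aux_valid (F : fenv A) : Prop :=
  F M 0 [::] = 1%R /\ forall a b : A, (0 <= F M 2 [:: a; b])%R.

(* The meaning of the atom [diag_mass] for all x. *)
Definition diag_only (F : fenv A) : Prop :=
  forall a : A, (\sum_(t : 1.-tuple A) F M 2 [:: a; thead t])%R = F M 2 [:: a; a].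

Lemma diag_only_off F : aux_valid F -> diag_only F ->
  forall a b : A, a != b -> F M 2 [:: a; b] = 0%R.
Proof.
move=> [_ F_ge0] diagF a b ab.
have off := @psum_eq_term_zero _ (fun t : 1.-tuple A => F M 2 [:: a; thead t]) [tuple a]
  (fun t => F_ge0 a _) (diagF a).
apply: (off [tuple b]).
by apply: contra ab => /eqP/(congr1 val) [->].
Qed.

Lemma aux_valid_updF F f k g : f < M -> aux_valid F -> aux_valid (updF F f k g).
Proof. by move=> fM; rewrite /aux_valid /updF (gtn_eqF fM). Qed.

Lemma diag_only_updF F f k g : f < M -> diag_only (updF F f k g) <-> diag_only F.
Proof. by move=> fM; rewrite /diag_only /updF (gtn_eqF fM). Qed.

(* Once M() = 1 and M(x,y) = 0, the substitution does not change values
   (the bound variables of p are below x, so x and y keep their values). *)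
Lemma eval_subst01 O F s (i : nterm) : term_ok O C_01 i -> maxv_t i < x ->
  aux_valid F -> F M 2 [:: s x; s y] = 0%R ->
  eval I F s (subst01_t zero one i) = eval I F s i.
Proof.
move=> + + [F1 _]; elim: i s => /= [c|g xs|f k xs|i IHi j IHj|i IHi j IHj|ys i IH] s ok ix F0 //.
- by case: ifP => [/eqP -> //|c1]; move: ok; rewrite /C_01 c1 orbF => /eqP ->.
- by case/andP: ok => /andP[_ oki] okj; rewrite IHi ?IHj //; lia.
- by case/andP: ok => /andP[_ oki] okj; rewrite IHi ?IHj //; lia.
- case/andP: ok => _ oki; apply: eq_bigr => t _; apply: IH => //; first lia.
  have [xys yys] : x \notin ys /\ y \notin ys by split; apply/negP => /max_list_ub; lia.
  by rewrite !upds_notin.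
Qed.

Lemma sat_subst01 O E (p : form) F s : form_ok O E C_01 p -> maxv p < x -> maxf p < M ->
  aux_valid F -> F M 2 [:: s x; s y] = 0%R ->
  sat I F s (subst01 zero one p) <-> sat I F s p.
Proof.
elim: p F s => /= [a b|a b|e i j|e i j|r xs|r xs|p IHp q IHq|p IHp q IHq|z p IH|z p IH|f k p IH]
  F s ok px pM Fv F0 //.
- case/andP: ok => /andP[_ oki] okj.
  by rewrite (@eval_subst01 O F s i) ?(@eval_subst01 O F s j) //; lia.
- case/andP: ok => /andP[_ oki] okj.
  by rewrite (@eval_subst01 O F s i) ?(@eval_subst01 O F s j) //; lia.
- by case/andP: ok => okp okq; rewrite IHp ?IHq //; lia.
- by case/andP: ok => okp okq; rewrite IHp ?IHq //; lia.
- have Ea a : sat I F (upd s z a) (subst01 zero one p) <-> sat I F (upd s z a) p.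
    have [xz yz] : (x == z) = false /\ (y == z) = false by split; apply/negbTE; lia.
    by apply: IH => //; [lia | rewrite /upd xz yz].
  by split=> -[a /Ea]; exists a.
- have Ea a : sat I F (upd s z a) (subst01 zero one p) <-> sat I F (upd s z a) p.
    have [xz yz] : (x == z) = false /\ (y == z) = false by split; apply/negbTE; lia.
    by apply: IH => //; [lia | rewrite /upd xz yz].
  by split=> H a; apply/Ea.
- have fM : f < M by lia.
  have Eg g : sat I (updF F f k g) s (subst01 zero one p) <-> sat I (updF F f k g) s p.
    apply: IH => //; [lia | exact: aux_valid_updF | by rewrite /updF (gtn_eqF fM)].
  by split=> -[g [dg /Eg]]; exists g.
Qed.

Lemma sat_diag_mass F s : sat I F s (diag_mass V x w M) <->
  (\sum_(t : 1.-tuple A) F M 2 [:: s x; thead t])%R = F M 2 [:: s x; s x].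
Proof.
have xw : (x == w) = false by apply/negbTE; lia.
rewrite /=; suff -> : (\sum_(t : 1.-tuple A) F M 2 [seq upds s [:: w] t i | i <- [:: x; w]])%R
    = (\sum_(t : 1.-tuple A) F M 2 [:: s x; thead t])%R by [].
by apply: eq_bigr => t _; rewrite tuple1_val /= /upd eqxx xw.
Qed.

(* Since the structure has two distinct elements, the guard holds iff M(.,.)
   is diagonal and p holds. *)
Lemma sat_guard O E (p : form) F s : 1 < #|A| -> form_ok O E C_01 p ->
  maxv p < x -> maxf p < M -> aux_valid F ->
  sat I F s (guard x y w M p) <-> diag_only F /\ sat I F s p.
Proof.
move=> A2 ok px pM Fv.
pose s2 a b := upd (upd s x a) y b.
have s2x a b : s2 a b x = a by rewrite /s2 /upd (ltn_eqF xy) eqxx.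
have s2y a b : s2 a b y = b by rewrite /s2 /upd eqxx.
have s2p a b : sat I F (s2 a b) p <-> sat I F s p.
  apply: (@sat_agree _ _ I p F x) => // v vx.
  by rewrite /s2 /upd (ltn_eqF vx) (ltn_eqF (ltn_trans vx xy)).
have s2subst a b : diag_only F -> a != b ->
    sat I F (s2 a b) (subst01 zero one p) <-> sat I F s p.
  move=> dF ab; rewrite (sat_subst01 ok) // ?s2x ?s2y; exact: diag_only_off.
have -> : sat I F s (guard x y w M p) <-> forall a b,
    sat I F (s2 a b) (diag_mass V x w M) /\
    (s2 a b x = s2 a b y \/ sat I F (s2 a b) (subst01 zero one p)) by [].
split=> [H | [dF ps] a b].
- have dF : diag_only F by move=> a; have [/sat_diag_mass] := H a a; rewrite s2x.
  have [a [b [_ _ ab]]] := card_gt1P A2.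
  split=> //; have [_ [|]] := H a b; last by move/(s2subst _ _ dF ab).
  by rewrite s2x s2y => eab; rewrite eab eqxx in ab.
- split; first by apply/sat_diag_mass; rewrite s2x; exact: dF.
  have [->|ab] := eqVneq a b; first by left; rewrite s2x s2y.
  by right; apply/(s2subst _ _ dF ab).
Qed.

(* The same below the quantifier prefix; the diagonality condition commutes
   with the prefix quantifiers because the universe is nonempty. *)
Lemma sat_under_guard O E (p : form) F s : 1 < #|A| -> form_ok O E C_01 p ->
  maxv p < x -> maxf p < M -> aux_valid F ->
  sat I F s (under_prefix (guard x y w M) p) <-> diag_only F /\ sat I F s p.
Proof.
move=> A2; elim: p F s => [a b|a b|e i j|e i j|r xs|r xs|p _ q _|p _ q _|z q _|z q IH|f k q IH]
  F s ok px pM Fv; try exact: (sat_guard s A2 ok px pM Fv).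
- have Ea a : sat I F (upd s z a) (under_prefix (guard x y w M) q) <->
      diag_only F /\ sat I F (upd s z a) q.
    by apply: IH => //; move: px => /=; lia.
  split=> [H | [dF H] a]; last exact/Ea.
  split; first by have [] := (Ea (s 0)).1 (H (s 0)).
  by move=> a; have [] := (Ea a).1 (H a).
- have fM : f < M by move: pM => /=; lia.
  have Eg g : sat I (updF F f k g) s (under_prefix (guard x y w M) q) <->
      diag_only F /\ sat I (updF F f k g) s q.
    rewrite -(diag_only_updF _ _ _ fM); apply: IH => //; first by move: pM => /=; lia.
    exact: aux_valid_updF.
  split=> [[g [dg /Eg [dF H]]] | [dF [g [dg H]]]]; first by split=> //; exists g.
  by exists g; split=> //; apply/Eg.
Qed.

End Elim01Semantics.

Lemma is_distr0_value (A : finType) (g : seq A -> R) : is_distr 0 g -> g [::] = 1%R.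
Proof.
case=> _ <-; rewrite (bigD1 [tuple]) //= big1 ?addr0 // => t /eqP[].
exact: tuple0.
Qed.

(* Point masses provide the witnesses for the new distributions. *)
Definition point_mass (A : finType) (t0 : seq A) : seq A -> R :=
  fun t => if t == t0 then 1%R else 0%R.

Lemma is_distr_point_mass (A : finType) k (t0 : k.-tuple A) : is_distr k (point_mass t0).
Proof.
split=> [t|]; first by rewrite /point_mass; case: ifP => _; [exact: ler01 | exact: lexx].
rewrite (bigD1 t0) //= /point_mass eqxx big1 ?addr0 // => t tt0.
by case: eqP => // /val_inj tt0'; rewrite tt0' eqxx in tt0.
Qed.

Lemma diag_only_point_mass (A : finType) (a0 : A) M (F : fenv A) :
  F M 2 = point_mass [:: a0; a0] -> diag_only M F.
Proof.
move=> FM a; rewrite FM (bigD1 [tuple a]) //= big1 ?addr0 // => t ta.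
rewrite /point_mass; case: eqP => // -[aa0 ta0]; case/eqP: ta.
by apply: val_inj; rewrite /= tuple1_val ta0 aa0.
Qed.

Lemma sat_elim01 (V : vocab) (A : finType) (I : structure V A) (s : nat -> A)
  (O : op -> bool) (E : cmp -> bool) (p : Defs.form V) :
  1 < #|A| -> form_ok O E C_01 p -> sat0 I s (elim01 p) <-> sat0 I s p.
Proof.
move=> A2 ok; rewrite /sat0 /elim01 /=.
set x := (maxv p).+1; set M := (maxf p).+1.
pose F0 : fenv A := fun _ _ _ => 0%R.
have key ge gd : is_distr 0 ge -> is_distr 2 gd ->
    sat I (updF (updF F0 M 0 ge) M 2 gd) s (under_prefix (guard x x.+1 x.+2 M) p) <->
    diag_only M (updF (updF F0 M 0 ge) M 2 gd) /\ sat I F0 s p.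
  move=> dge [gd_ge0 _].
  rewrite (sat_under_guard _ (ltnSn x) (ltnSn x.+1) _ A2 ok (ltnSn _) (ltnSn _)); last first.
    by split=> [|a b]; rewrite /updF !eqxx /=; [exact: is_distr0_value | exact: gd_ge0 [tuple a; b]].
  suff -> : sat I (updF (updF F0 M 0 ge) M 2 gd) s p <-> sat I F0 s p by [].
  apply: (@sat_fagree _ _ I p M) => [|f k l fM]; first exact: ltnSn.
  by rewrite /updF (ltn_eqF fM).
split=> [[ge [dge [gd [dgd /(key _ _ dge dgd) []]]]] // | ps].
exists (point_mass [tuple]); split; first exact: is_distr_point_mass.
exists (point_mass [tuple s 0; s 0]); split; first exact: is_distr_point_mass.
apply/key; [exact: is_distr_point_mass | exact: is_distr_point_mass | split=> //].
by apply: (diag_only_point_mass (a0 := s 0)); rewrite /updF !eqxx.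
Qed.

Lemma struc_eqR_refl (V : vocab) (p : Defs.form V) : struc_eqR p p.
Proof. by left; split. Qed.

Lemma struc_eqR_elim01 (V : vocab) (O : op -> bool) (E : cmp -> bool) (p : Defs.form V) :
  form_ok O E C_01 p -> struc_eqR p (elim01 p).
Proof.
move=> ok; left; split=> [v|A I s A2]; first by rewrite free_elim01.
by apply: iff_sym; apply: sat_elim01 ok.
Qed.

Theorem mainTheorem7 (V : vocab) :
  equivR (L_ESO_d (V := V) O_SUM E_eq C_none) (L_ESO_d O_SUM E_eq C_01) /\
  equivR (fun p => [&& L_ESO_d (V := V) O_SUM E_eq C_none p, almost_conj p & prefix_EfA p])
         (fun p => [&& L_ESO_d (V := V) O_SUM E_eq C_01 p, almost_conj p & prefix_EfA p]).
Proof.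
have elim01_eq (p : Defs.form V) : L_ESO_d O_SUM E_eq C_01 p -> struc_eqR p (elim01 p).
  by case/and3P=> _ okp _; exact: struc_eqR_elim01 okp.
split; split=> p.
- by move=> Lp; exists p; split; [exact: L_ESO_d_const01 | exact: struc_eqR_refl].
- by move=> Lp; exists (elim01 p); split; [exact: elim01_L_ESO | exact: elim01_eq].
- case/and3P=> Lp acp pp; exists p; split; last exact: struc_eqR_refl.
  by rewrite L_ESO_d_const01 ?acp ?pp.
- case/and3P=> Lp acp pp; exists (elim01 p); split; last exact: elim01_eq.
  by rewrite elim01_L_ESO ?almost_conj_elim01 ?prefix_EfA_elim01.
Qed.
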